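(* Let $n\ge2$ and let $(x_j)_{j\in J}$ be a finite frame of $\mathbb C^n$. Suppose that $x,y\in\mathbb C^n$ are linearly independent and that $\langle x,x_j\rangle$ and $\langle y,x_j\rangle$ are real for all $j\in J$. Then there exists $z\in\operatorname{span}\{x,y\}$ such that $(x_j)_{j\in J}$ does not do stable phase retrieval near $z$.
   Context: A finite frame $(x_j)_{j\in J}$ of $\mathbb C^n$ satisfies $A\|x\|^2\le\sum_{j}|\langle x,x_j\rangle|^2\le B\|x\|^2$ for some $B\ge A>0$; its analysis operator is $\Theta(x)=(\langle x,x_j\rangle)_{j\in J}$ and $|\Theta x|=(|\langle x,x_j\rangle|)_{j\in J}$. For $x,y$ with $x\neq\lambda y$ for all $|\lambda|=1$, set $\Psi(x,y)=\||\Theta x|-|\Theta y|\|/\min_{|\lambda|=1}\|x-\lambda y\|$. For $C>0$, the frame does $C$-stable phase retrieval near $z$ if $\liminf_{w\to z,\ w\notin\{\lambda z:|\lambda|=1\}} C\,\Psi(z,w)\ge1$, and does stable phase retrieval near $z$ if this holds for some $C>0$. *)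

From HB Require Import structures.
From mathcomp Require Import all_boot all_order all_algebra.
From mathcomp Require Import complex.
From mathcomp Require Import boolp classical_sets reals.
Set Implicit Arguments. Unset Strict Implicit. Unset Printing Implicit Defensive.
Import Order.TTheory GRing.Theory Num.Theory.
Local Open Scope ring_scope.
Local Open Scope complex_scope.
Local Open Scope classical_set_scope.

Section Defs.
Variables (R : realType) (n : nat).

Definition cmod (z : R[i]) : R := Num.sqrt (complex.Re z ^+ 2 + complex.Im z ^+ 2).

Definition cip (u v : 'rV[R[i]]_n) : R[i] := \sum_(k < n) u 0 k * (v 0 k)^*.

Definition vnorm (u : 'rV[R[i]]_n) : R := Num.sqrt (\sum_(k < n) cmod (u 0 k) ^+ 2).

Variable J : finType.

Definition is_frame (xs : J -> 'rV[R[i]]_n) : Prop :=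
  exists A B : R, 0 < A /\ A <= B /\
    forall x : 'rV[R[i]]_n,
      A * vnorm x ^+ 2 <= \sum_(j : J) cmod (cip x (xs j)) ^+ 2 /\
      \sum_(j : J) cmod (cip x (xs j)) ^+ 2 <= B * vnorm x ^+ 2.

Definition absTheta (xs : J -> 'rV[R[i]]_n) (x : 'rV[R[i]]_n) : J -> R :=
  fun j => cmod (cip x (xs j)).

Definition rdist (a b : J -> R) : R := Num.sqrt (\sum_(j : J) (a j - b j) ^+ 2).

(* min_{|lambda| = 1} || x - lambda y || (the infimum is attained) *)
Definition phase_dist (x y : 'rV[R[i]]_n) : R :=
  inf [set vnorm (x - l *: y) | l in [set l : R[i] | cmod l = 1]].

Definition same_phase_class (x y : 'rV[R[i]]_n) : Prop :=
  exists l : R[i], cmod l = 1 /\ x = l *: y.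

Definition Psi (xs : J -> 'rV[R[i]]_n) (x y : 'rV[R[i]]_n) : R :=
  rdist (absTheta xs x) (absTheta xs y) / phase_dist x y.

(* liminf_{w -> z, w not in {lambda z : |lambda|=1}} C Psi(z,w) >= 1,
   written out: for every eps > 0 there is a punctured neighbourhood
   on which C Psi(z,w) >= 1 - eps. *)
Definition C_stable_near (xs : J -> 'rV[R[i]]_n) (C : R) (z : 'rV[R[i]]_n) : Prop :=
  forall eps : R, 0 < eps -> exists delta : R, 0 < delta /\
    forall w : 'rV[R[i]]_n, vnorm (w - z) < delta -> ~ same_phase_class w z ->
      1 - eps <= C * Psi xs z w.

Definition stable_near (xs : J -> 'rV[R[i]]_n) (z : 'rV[R[i]]_n) : Prop :=
  exists C : R, 0 < C /\ C_stable_near xs C z.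

End Defs.

From HB Require Import structures.
From mathcomp Require Import all_boot all_order all_algebra.
From mathcomp Require Import complex.
From mathcomp Require Import boolp classical_sets reals.
From mathcomp Require Import ring lra.
Import Order.TTheory GRing.Theory Num.Theory.
Local Open Scope ring_scope.
Local Open Scope complex_scope.
Set Implicit Arguments. Unset Strict Implicit.

(* Write a_j, b_j for the (real) frame coefficients of x and y, and choose
   alpha so that c_j := a_j + alpha b_j vanishes only where b_j does.  The
   coefficients of z := x + alpha y are the c_j, those of w_s := z + i s y are
   c_j + i s b_j, so | |<z,x_j>| - |<w_s,x_j>| | <= s^2 b_j^2 / |c_j| and
   || |Theta z| - |Theta w_s| || = O(s^2).  On the other hand, for unimodular
   l = l1 + i l2 the imaginary parts of the coefficients of z - l w_s dominate
   l2 c_j + s b_j, whose sum of squares is at least s^2 times the Gram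
   determinant of the independent families c and b divided by sum c_j^2; the
   upper frame bound turns this into ||z - l w_s|| >= kappa s.  Hence
   Psi(z, w_s) = O(s) while w_s -> z, and no constant C works near z. *)

Section ComplexRows.
Variables (R : realType) (n : nat).

Lemma cmod_sq (z : R[i]) : cmod z ^+ 2 = complex.Re z ^+ 2 + complex.Im z ^+ 2.
Proof. by rewrite /cmod sqr_sqrtr // addr_ge0 // sqr_ge0. Qed.

Lemma cmod_ge0 (z : R[i]) : 0 <= cmod z.
Proof. exact: sqrtr_ge0. Qed.

Lemma cmodR (c : R) : cmod c%:C = `|c|.
Proof. by rewrite /cmod /= expr0n /= addr0 sqrtr_sqr. Qed.

Lemma cmod1 : cmod (1 : R[i]) = 1.
Proof. by rewrite cmodR normr1. Qed.

Lemma cmodJ (z : R[i]) : cmod z^* = cmod z.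
Proof. by case: z => a b; rewrite /cmod /= sqrrN. Qed.

Lemma cmodM (u v : R[i]) : cmod (u * v) = cmod u * cmod v.
Proof.
case: u v => [a b] [c d]; rewrite /cmod -sqrtrM ?addr_ge0 ?sqr_ge0 //=.
by congr Num.sqrt; ring.
Qed.

Lemma conjc_mul_unimodular (l : R[i]) : cmod l = 1 -> l^* * l = 1.
Proof.
case: l => a b /(congr1 (fun r => r ^+ 2)); rewrite cmod_sq expr1n /= => hab.
by apply/eqP; rewrite eq_complex /= -hab; apply/andP; split; apply/eqP; ring.
Qed.

Lemma cipD (u v w : 'rV[R[i]]_n) : cip (u + v) w = cip u w + cip v w.
Proof. by rewrite /cip -big_split; apply: eq_bigr => k _; rewrite !mxE mulrDl. Qed.

Lemma cipZ (c : R[i]) (u w : 'rV[R[i]]_n) : cip (c *: u) w = c * cip u w.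
Proof. by rewrite /cip mulr_sumr; apply: eq_bigr => k _; rewrite !mxE mulrA. Qed.

Lemma cipB (u v w : 'rV[R[i]]_n) : cip (u - v) w = cip u w - cip v w.
Proof. by rewrite /cip -sumrB; apply: eq_bigr => k _; rewrite !mxE mulrBl. Qed.

Lemma vnorm_sq (u : 'rV[R[i]]_n) : vnorm u ^+ 2 = \sum_(k < n) cmod (u 0 k) ^+ 2.
Proof. by rewrite /vnorm sqr_sqrtr // sumr_ge0 // => k _; rewrite sqr_ge0. Qed.

Lemma vnorm_ge0 (u : 'rV[R[i]]_n) : 0 <= vnorm u.
Proof. exact: sqrtr_ge0. Qed.

Lemma vnormZ (c : R[i]) (u : 'rV[R[i]]_n) : vnorm (c *: u) = cmod c * vnorm u.
Proof.
rewrite /vnorm (eq_bigr (fun k => cmod c ^+ 2 * cmod (u 0 k) ^+ 2)); last first.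
  by move=> k _; rewrite mxE cmodM exprMn.
by rewrite -mulr_sumr sqrtrM ?sqr_ge0 // sqrtr_sqr ger0_norm ?cmod_ge0.
Qed.

Lemma vnorm0 : vnorm (0 : 'rV[R[i]]_n) = 0.
Proof. by rewrite -(scale0r (0 : 'rV[R[i]]_n)) vnormZ /cmod /= expr0n /= addr0 sqrtr0 mul0r. Qed.

Lemma vnorm_eq0 (u : 'rV[R[i]]_n) : vnorm u = 0 -> u = 0.
Proof.
move=> /(congr1 (fun r => r ^+ 2)); rewrite vnorm_sq expr0n /= => /eqP.
rewrite psumr_eq0 => [/allP u0|k _]; last exact: sqr_ge0.
apply/rowP => k; rewrite mxE.
move: (u0 k (mem_index_enum k)); rewrite cmod_sq; case: (u 0 k) => a b /= /eqP ab0.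
by apply/eqP; rewrite eq_complex /=; apply/andP; split; apply/eqP/eqP;
  rewrite -sqrf_eq0; apply/eqP; nra.
Qed.

End ComplexRows.

Section GramDeterminant.
Variables (R : realFieldType) (J : finType) (f g : J -> R).

Definition gram_det : R :=
  (\sum_j f j ^+ 2) * (\sum_j g j ^+ 2) - (\sum_j f j * g j) ^+ 2.

Lemma sum_sq_lincomb (t s : R) :
  \sum_j (t * f j + s * g j) ^+ 2 =
  t ^+ 2 * \sum_j f j ^+ 2 + 2 * t * s * \sum_j f j * g j + s ^+ 2 * \sum_j g j ^+ 2.
Proof.
rewrite !mulr_sumr -!big_split /=; apply: eq_bigr => j _; ring.
Qed.

Lemma gram_det_lincomb (t s : R) :
  (\sum_j f j ^+ 2) * \sum_j (t * f j + s * g j) ^+ 2 =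
  (t * \sum_j f j ^+ 2 + s * \sum_j f j * g j) ^+ 2 + s ^+ 2 * gram_det.
Proof. by rewrite sum_sq_lincomb /gram_det; ring. Qed.

Hypothesis fg_indep :
  forall t s : R, (forall j, t * f j + s * g j = 0) -> t = 0 /\ s = 0.

Lemma sum_sq_lincomb_gt0 (t s : R) :
  (t != 0) || (s != 0) -> 0 < \sum_j (t * f j + s * g j) ^+ 2.
Proof.
move=> ts0; rewrite lt_def sumr_ge0 ?andbT => [|j _]; last exact: sqr_ge0.
apply/negP => /eqP/psumr_eq0P sum0.
have [t0 s0] : t = 0 /\ s = 0.
  apply: fg_indep => j; apply/eqP; rewrite -sqrf_eq0 sum0 // => k _; exact: sqr_ge0.
by move: ts0; rewrite t0 s0 eqxx.
Qed.

Lemma sum_sq_gt0 : 0 < \sum_j f j ^+ 2.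
Proof.
have := @sum_sq_lincomb_gt0 1 0; rewrite oner_eq0 => /(_ isT).
by under eq_bigr do rewrite mul1r mul0r addr0.
Qed.

Lemma gram_det_gt0 : 0 < gram_det.
Proof.
set F := \sum_j f j ^+ 2; set M := \sum_j f j * g j.
have F_gt0 : 0 < F := sum_sq_gt0.
have := gram_det_lincomb (- M) F; rewrite -/F -/M.
have -> : - M * F + F * M = 0 by ring.
rewrite expr0n /= add0r => FF.
have : 0 < F * \sum_j (- M * f j + F * g j) ^+ 2.
  by rewrite mulr_gt0 // sum_sq_lincomb_gt0 // (gt_eqF F_gt0) orbT.
by rewrite FF pmulr_rgt0 // exprn_gt0.
Qed.

End GramDeterminant.

Lemma exists_lincomb_neq0 (R : realFieldType) (J : finType) (a b : J -> R) :
  exists alpha : R, forall j, b j != 0 -> a j + alpha * b j != 0.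
Proof.
pose S := \sum_k `|a k| / `|b k|.
exists (1 + S) => j bj0; apply/eqP => /eqP; rewrite addr_eq0 => /eqP aj.
have bj_gt0 : 0 < `|b j| by rewrite normr_gt0.
have S_ge : `|a j| / `|b j| <= S.
  by rewrite /S (bigD1 j) //= lerDl sumr_ge0 // => k _; rewrite divr_ge0.
have S_ge0 : 0 <= S by apply: le_trans S_ge; rewrite divr_ge0.
move: S_ge; rewrite aj normrN normrM mulfK ?gt_eqF // ger0_norm; lra.
Qed.

Lemma norm_le_sqrt_add_sq (R : rcfType) (c d : R) : `|c| <= Num.sqrt (c ^+ 2 + d ^+ 2).
Proof. by rewrite -sqrtr_sqr ler_sqrt ?addr_ge0 ?sqr_ge0 // lerDl sqr_ge0. Qed.

(* The difference of the two square roots is d^2 / (sqrt(c^2 + d^2) + |c|). *)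
Lemma sqrt_add_sq_sub_norm_le (R : rcfType) (c d : R) :
  c != 0 -> Num.sqrt (c ^+ 2 + d ^+ 2) - `|c| <= d ^+ 2 / `|c|.
Proof.
move=> c0; have c_gt0 : 0 < `|c| by rewrite normr_gt0.
have r_ge := norm_le_sqrt_add_sq c d.
have r2 : Num.sqrt (c ^+ 2 + d ^+ 2) ^+ 2 = c ^+ 2 + d ^+ 2.
  by rewrite sqr_sqrtr // addr_ge0 // sqr_ge0.
have c2 : `|c| ^+ 2 = c ^+ 2 by rewrite real_normK // num_real.
rewrite ler_pdivlMr //; nra.
Qed.

Section NoStablePhaseRetrieval.
Variables (R : realType) (n : nat) (J : finType) (xs : J -> 'rV[R[i]]_n).

Lemma same_phase_class_sym (u v : 'rV[R[i]]_n) :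
  same_phase_class u v -> same_phase_class v u.
Proof.
move=> [l [l1 ->]]; exists l^*; split; first by rewrite cmodJ.
by rewrite scalerA conjc_mul_unimodular // scale1r.
Qed.

Lemma phase_dist_ge (u v : 'rV[R[i]]_n) (m : R) :
  (forall l, cmod l = 1 -> m <= vnorm (u - l *: v)) -> m <= phase_dist u v.
Proof.
move=> ge_m; apply: lb_le_inf; first by exists (vnorm (u - 1 *: v)), 1 => //; exact: cmod1.
by move=> _ [l l1 <-]; exact: ge_m.
Qed.

Lemma not_stable_near_of_Psi_le (z : 'rV[R[i]]_n) (w : R -> 'rV[R[i]]_n) (M K : R) :
  (forall s, 0 < s -> vnorm (w s - z) <= s * M) ->
  (forall s, 0 < s -> ~ same_phase_class (w s) z) ->
  (forall s, 0 < s -> Psi xs z (w s) <= s * K) ->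
  ~ stable_near xs z.
Proof.
move=> w_near w_apart Psi_small [C [C_gt0 C_stable]].
have [d [d_gt0 stable_d]] := C_stable 2^-1 (ltac:(by rewrite invr_gt0)).
have M1_gt0 : 0 < `|M| + 1 by rewrite ltr_pwDr.
have K1_gt0 : 0 < C * (`|K| + 1) by rewrite mulr_gt0 // ltr_pwDr.
have [u [u_gt0 uM uK]] : exists u, [/\ 0 < u, u * (`|M| + 1) <= d
    & u * (C * (`|K| + 1)) <= 1].
  exists (Num.min (d / (`|M| + 1)) (C * (`|K| + 1))^-1); split.
  - by rewrite lt_min !divr_gt0 // invr_gt0.
  - by rewrite -ler_pdivlMr // ge_min lexx.
  - by rewrite -ler_pdivlMr // mul1r ge_min lexx orbT.
have s_gt0 : 0 < u / 2 by rewrite divr_gt0.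
have uMM : u * M <= u * `|M| by apply: ler_wpM2l; [exact: ltW | exact: ler_norm].
have s_near : vnorm (w (u / 2) - z) < d.
  apply: le_lt_trans (w_near _ s_gt0) _; lra.
have := stable_d _ s_near (w_apart _ s_gt0).
have CuKK : C * u * K <= C * u * `|K|.
  by apply: ler_wpM2l; [rewrite ltW ?mulr_gt0 | exact: ler_norm].
have := Psi_small _ s_gt0; nra.
Qed.

Variables (B : R) (x y : 'rV[R[i]]_n).
Hypothesis B_gt0 : 0 < B.
Hypothesis analysis_inj : forall v, (forall j, cip v (xs j) = 0) -> v = 0.
Hypothesis analysis_le :
  forall v, \sum_j cmod (cip v (xs j)) ^+ 2 <= B * vnorm v ^+ 2.
Hypothesis xy_indep : forall p q : R[i], p *: x + q *: y = 0 -> p = 0 /\ q = 0.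
Hypothesis x_real : forall j, cip x (xs j) \is Num.real.
Hypothesis y_real : forall j, cip y (xs j) \is Num.real.

Let a j := complex.Re (cip x (xs j)).
Let b j := complex.Re (cip y (xs j)).

Lemma cip_x j : cip x (xs j) = (a j)%:C. Proof. by rewrite RRe_real. Qed.
Lemma cip_y j : cip y (xs j) = (b j)%:C. Proof. by rewrite RRe_real. Qed.

Lemma real_coords_indep (p q : R) :
  (forall j, p * a j + q * b j = 0) -> p = 0 /\ q = 0.
Proof.
move=> pq0.
have v0 : p%:C *: x + q%:C *: y = 0.
  apply: analysis_inj => j; rewrite cipD !cipZ cip_x cip_y.
  by apply/eqP; rewrite eq_complex /= !mulr0 !mul0r !subr0 !addr0 pq0 !eqxx.
by have [/(congr1 (@complex.Re R)) + /(congr1 (@complex.Re R))] := xy_indep v0.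
Qed.

Section Perturbation.
Variable alpha : R.
Hypothesis alpha_avoids : forall j, b j != 0 -> a j + alpha * b j != 0.

Let c j := a j + alpha * b j.
Let z := x + alpha%:C *: y.
Let w s := z + s*i *: y.

Lemma cip_z j : cip z (xs j) = (c j)%:C.
Proof.
rewrite cipD cipZ cip_x cip_y; apply/eqP; rewrite eq_complex /=.
by rewrite !mulr0 !mul0r !subr0 !addr0 !eqxx.
Qed.

Lemma cip_w s j : cip (w s) (xs j) = c j +i* (s * b j).
Proof.
rewrite cipD cipZ cip_z cip_y; apply/eqP; rewrite eq_complex /=.
by rewrite !mulr0 !mul0r !subr0 !addr0 !add0r !eqxx.
Qed.

Lemma coords_indep (p q : R) :
  (forall j, p * c j + q * b j = 0) -> p = 0 /\ q = 0.
Proof.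
move=> pq0; have [p0 q0] : p = 0 /\ p * alpha + q = 0.
  by apply: real_coords_indep => j; rewrite -(pq0 j) /c; ring.
by move: q0; rewrite p0 mul0r add0r.
Qed.

Let kappa := Num.sqrt (gram_det c b / ((\sum_j c j ^+ 2) * B)).

Lemma kappa_gt0 : 0 < kappa.
Proof.
by rewrite sqrtr_gt0 divr_gt0 ?mulr_gt0 ?(gram_det_gt0 coords_indep) ?(sum_sq_gt0 coords_indep).
Qed.

(* The coefficient of z - l w_s has squared modulus
   (l2 c_j + s b_j)^2 + ((1 - l1) c_j)^2 when l1^2 + l2^2 = 1. *)
Lemma cmod_cip_sub_phase_ge s l1 l2 j : l1 ^+ 2 + l2 ^+ 2 = 1 ->
  (l2 * c j + s * b j) ^+ 2 <= cmod (cip (z - (l1 +i* l2) *: w s) (xs j)) ^+ 2.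
Proof.
move=> l_unit; rewrite cipB cipZ cip_z cip_w cmod_sq /=.
have := sqr_ge0 ((1 - l1) * c j); nra.
Qed.

Lemma vnorm_sub_phase_ge s l :
  0 < s -> cmod l = 1 -> s * kappa <= vnorm (z - l *: w s).
Proof.
case: l => l1 l2 s_gt0 /(congr1 (fun r => r ^+ 2)); rewrite cmod_sq expr1n /= => l_unit.
set v := z - _ *: _.
have F_gt0 := sum_sq_gt0 coords_indep.
have D_gt0 := gram_det_gt0 coords_indep.
have sum_le : \sum_j (l2 * c j + s * b j) ^+ 2 <= B * vnorm v ^+ 2.
  apply: le_trans (analysis_le v); apply: ler_sum => j _.
  exact: cmod_cip_sub_phase_ge.
have D_le : s ^+ 2 * gram_det c b <= (\sum_j c j ^+ 2) * (B * vnorm v ^+ 2).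
  apply: le_trans (ler_wpM2l (ltW F_gt0) sum_le).
  by rewrite gram_det_lincomb lerDr sqr_ge0.
have FB_gt0 : 0 < (\sum_j c j ^+ 2) * B by rewrite mulr_gt0.
have skappa_ge0 : 0 <= s * kappa by rewrite mulr_ge0 // ltW // kappa_gt0.
rewrite -ler_sqr ?nnegrE ?vnorm_ge0 // exprMn sqr_sqrtr; last first.
  by rewrite divr_ge0 // ltW.
rewrite mulrA ler_pdivrMr //; lra.
Qed.

Lemma phase_dist_w_ge s : 0 < s -> s * kappa <= phase_dist z (w s).
Proof. by move=> s_gt0; apply: phase_dist_ge => l; exact: vnorm_sub_phase_ge. Qed.

Lemma w_not_same_phase s : 0 < s -> ~ same_phase_class (w s) z.
Proof.
move=> s_gt0 /same_phase_class_sym [l [l1 zE]].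
have := vnorm_sub_phase_ge s_gt0 l1; rewrite -zE subrr vnorm0.
by apply/negP; rewrite -ltNge mulr_gt0 // kappa_gt0.
Qed.

Lemma vnorm_w_sub s : 0 < s -> vnorm (w s - z) <= s * vnorm y.
Proof.
move=> s_gt0; rewrite /w addrC addKr vnormZ /cmod /= expr0n add0r sqrtr_sqr.
by rewrite gtr0_norm.
Qed.

Let K := \sum_j b j ^+ 2 / `|c j|.

Lemma K_ge0 : 0 <= K.
Proof. by rewrite sumr_ge0 // => j _; rewrite divr_ge0 // sqr_ge0. Qed.

Lemma absTheta_w_sub_le s j :
  `|absTheta xs z j - absTheta xs (w s) j| <= s ^+ 2 * K.
Proof.
rewrite /absTheta cip_z cip_w cmodR /cmod /=.
have r_ge := norm_le_sqrt_add_sq (c j) (s * b j).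
rewrite distrC ger0_norm ?subr_ge0 //.
have [bj0|bj0] := eqVneq (b j) 0.
  by rewrite bj0 mulr0 expr0n addr0 sqrtr_sqr subrr mulr_ge0 ?sqr_ge0 ?K_ge0.
apply: le_trans (sqrt_add_sq_sub_norm_le _ (alpha_avoids bj0)) _.
rewrite exprMn -mulrA ler_wpM2l ?sqr_ge0 //.
by rewrite /K (bigD1 j) //= lerDl sumr_ge0 // => k _; rewrite divr_ge0 ?sqr_ge0.
Qed.

Lemma rdist_absTheta_w_le s :
  rdist (absTheta xs z) (absTheta xs (w s)) <= Num.sqrt #|J|%:R * (s ^+ 2 * K).
Proof.
have sK_ge0 : 0 <= s ^+ 2 * K by rewrite mulr_ge0 ?sqr_ge0 ?K_ge0.
rewrite /rdist -[X in _ <= _ * X]ger0_norm // -sqrtr_sqr -sqrtrM ?ler0n //.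
rewrite ler_sqrt; last by rewrite mulr_ge0 ?ler0n ?sqr_ge0.
rewrite mulr_natl -sumr_const.
apply: ler_sum => j _; rewrite -real_normK ?num_real // ler_sqr ?nnegrE //.
exact: absTheta_w_sub_le.
Qed.

Lemma Psi_w_le s :
  0 < s -> Psi xs z (w s) <= s * (Num.sqrt #|J|%:R * K / kappa).
Proof.
move=> s_gt0; have kappa0 := kappa_gt0.
have p_gt0 : 0 < phase_dist z (w s).
  by apply: lt_le_trans (phase_dist_w_ge s_gt0); rewrite mulr_gt0.
rewrite /Psi ler_pdivrMr //; apply: le_trans (rdist_absTheta_w_le s) _.
have -> : Num.sqrt #|J|%:R * (s ^+ 2 * K) =
    s * (Num.sqrt #|J|%:R * K / kappa) * (s * kappa).
  by field; rewrite gt_eqF.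
apply: ler_wpM2l; last exact: phase_dist_w_ge.
by rewrite mulr_ge0 ?divr_ge0 ?mulr_ge0 ?sqrtr_ge0 ?K_ge0 ?ltW.
Qed.

Lemma not_stable_near_perturbed : ~ stable_near xs z.
Proof.
apply: (@not_stable_near_of_Psi_le _ w (vnorm y) (Num.sqrt #|J|%:R * K / kappa)).
- exact: vnorm_w_sub.
- exact: w_not_same_phase.
- exact: Psi_w_le.
Qed.

End Perturbation.

Lemma exists_not_stable_near_in_span : exists z : 'rV[R[i]]_n,
  (exists p q : R[i], z = p *: x + q *: y) /\ ~ stable_near xs z.
Proof.
have [alpha alpha_avoids] := exists_lincomb_neq0 a b.
exists (x + alpha%:C *: y); split; first by exists 1, alpha%:C; rewrite scale1r.
exact: not_stable_near_perturbed alpha_avoids.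
Qed.

End NoStablePhaseRetrieval.

Lemma frame_analysis_inj (R : realType) (n : nat) (J : finType)
    (xs : J -> 'rV[R[i]]_n) (A : R) (v : 'rV[R[i]]_n) :
  0 < A -> A * vnorm v ^+ 2 <= \sum_j cmod (cip v (xs j)) ^+ 2 ->
  (forall j, cip v (xs j) = 0) -> v = 0.
Proof.
move=> A_gt0 lower v0; apply: vnorm_eq0; apply/eqP; rewrite -sqrf_eq0 eq_le sqr_ge0 andbT.
rewrite -(pmulr_rle0 _ A_gt0); apply: le_trans lower _.
by rewrite big1 // => j _; rewrite v0 cmodR normr0 expr0n.
Qed.

Theorem theorem4p3 (R : realType) (n : nat) (J : finType)
    (xs : J -> 'rV[R[i]]_n) (x y : 'rV[R[i]]_n) :
  (2 <= n)%N ->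
  is_frame xs ->
  (forall a b : R[i], a *: x + b *: y = 0 -> a = 0 /\ b = 0) ->
  (forall j : J, cip x (xs j) \is Num.real) ->
  (forall j : J, cip y (xs j) \is Num.real) ->
  exists z : 'rV[R[i]]_n,
    (exists a b : R[i], z = a *: x + b *: y) /\ ~ stable_near xs z.
Proof.
move=> _ [A [B [A_gt0 [AB frame]]]] xy_indep x_real y_real.
apply: (exists_not_stable_near_in_span (B := B)) => //.
- exact: lt_le_trans AB.
- by move=> v; apply: frame_analysis_inj A_gt0 (frame v).1.
- by move=> v; exact: (frame v).2.
Qed.
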